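(* Let $d\in\mathbb{N}$ and let $\mathbb{N}^{1/d}$ denote the set of positive real $d$-th roots of all natural numbers. Then \[ B(0,d)=\begin{cases}\mathbb{N}^{1/d}\setminus\{1\} & \text{if } d\notin\phi(\mathbb{N}),\\ \mathbb{N}^{1/d} & \text{if } d\in\phi(\mathbb{N}),\end{cases}\qquad B(d,d)=\begin{cases}\mathbb{N}^{1/d}\setminus\{1\} & \text{if } d>1,\\ \mathbb{N}^{1/d} & \text{if } d=1,\end{cases}\] where $\phi$ is Euler's phi function.
   Context: $\bar{\mathbb{Q}}$ is the algebraic closure of $\mathbb{Q}$ in $\mathbb{C}$. For $\alpha\in\bar{\mathbb{Q}}$ of degree $d$, let $a_0>0$ be the leading coefficient of a minimal polynomial of $\alpha$ in $\mathbb{Z}[t]$ and $\alpha_1,\dots,\alpha_d$ its conjugates; $H(\alpha)=\big(a_0\prod_{i=1}^d\max\{1,|\alpha_i|\}\big)^{1/d}$ is the absolute multiplicative Weil height. For $k\in\{0,\dots,d\}$, $A(k,d)$ is the set of $\alpha\in\mathbb{C}$ with $[\mathbb{Q}(\alpha):\mathbb{Q}]=d$ having precisely $k$ conjugates in the open unit disk, and $B(k,d)=\{H(\alpha):\alpha\in A(k,d)\}$. *)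

From HB Require Import structures.
From mathcomp Require Import all_boot all_order all_algebra all_field.
Set Implicit Arguments. Unset Strict Implicit. Unset Printing Implicit Defensive.
Import Order.TTheory GRing.Theory Num.Theory.
Local Open Scope ring_scope.

Definition degC (z : algC) : nat := (size (minCpoly z)).-1.

(* the conjugates alpha_1, ..., alpha_d of z: the roots of its minimal
   polynomial, listed with multiplicity (all simple) *)
Definition conjugates (z : algC) : seq algC :=
  sval (closed_field_poly_normal (minCpoly z)).

(* p is "a minimal polynomial of z in Z[t]" with positive leading coefficient:
   a primitive integer polynomial (content 1, positive leading coefficient)
   proportional to the minimal polynomial of z over Q. *)
Definition Zminpoly (z : algC) (p : {poly int}) : Prop :=
  zcontents p = 1 /\
  map_poly (fun a : int => a%:~R : algC) p = (lead_coef p)%:~R *: minCpoly z.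

(* absolute multiplicative Weil height, given the leading coefficient a0 *)
Definition heightC (z : algC) (a0 : int) : algC :=
  (degC z).-root (a0%:~R * \prod_(a <- conjugates z) Num.max 1 `|a|).

Definition Aset (k d : nat) (z : algC) : Prop :=
  degC z = d /\ count (fun a : algC => `|a| < 1) (conjugates z) = k.

Definition Bset (k d : nat) (h : algC) : Prop :=
  exists (z : algC) (p : {poly int}),
    Aset k d z /\ Zminpoly z p /\ h = heightC z (lead_coef p).

Definition Nroot (d : nat) (h : algC) : Prop :=
  exists n : nat, (0 < n)%N /\ h = d.-root (n%:R : algC).

Definition in_totient_image (d : nat) : Prop :=
  exists n : nat, (0 < n)%N /\ totient n = d.

From HB Require Import structures.
From mathcomp Require Import all_boot all_order all_algebra all_field.
Set Implicit Arguments. Unset Strict Implicit. Unset Printing Implicit Defensive.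
Import Order.TTheory GRing.Theory Num.Theory.
Local Open Scope ring_scope.

(* Let z have degree d and primitive minimal polynomial p = a0 t^d + ... + p0.
   If no conjugate of z lies in the open unit disk, Vieta's formula gives
   H(z)^d = |p0|; if all of them do, H(z)^d = a0.  Hence both sets consist of
   d-th roots of positive integers.  Conversely, for n >= 2, a root of the
   Eisenstein binomial n t^d + P (P a prime factor of n - 1), or of t^d + 2
   when n = 2, and its inverse, a root of the reciprocal binomial, give
   elements of B(d,d) and B(0,d) of height n^(1/d).

   Height 1 in B(0,d) forces a0 = 1 and all conjugates on the unit circle, so
   by Kronecker's theorem z is a root of unity and d is a value of Euler's
   function; conversely a primitive m-th root of unity has height 1 and lies
   in B(0,phi(m)).  Height 1 in B(d,d) forces |p0| < 1, hence p0 = 0, z = 0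
   and d = 1; conversely 0 has height 1 and lies in B(1,1). *)

Local Notation pQtoC := (map_poly (ratr : rat -> algC)).
Local Notation pZtoC := (map_poly (intr : int -> algC)).
Local Notation pZtoQ := (map_poly (intr : int -> rat)).

Lemma polyOver1_rat (L : fieldExtType rat) (LC : {rmorphism L -> algC})
    (q : {poly L}) :
  q \is a polyOver 1%VS -> exists q1 : {poly rat}, map_poly LC q = pQtoC q1.
Proof.
move/polyOverP => q1P; have a_ i := sig_eqW (vlineP _ _ (q1P i)).
exists (\poly_(i < size q) sval (a_ i)).
apply/polyP=> i; rewrite coef_poly coef_map coef_poly /=.
case: ifP => _; rewrite ?rmorph0 //; case: (a_ i) => a /= ->.
by rewrite alg_num_field fmorph_rat.
Qed.

Lemma splittingField_roots (L : fieldExtType rat) (LC : {rmorphism L -> algC})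
    (p : {poly rat}) (rr : seq L) :
  pQtoC p = \prod_(a <- map LC rr) ('X - a%:P) -> <<1 & rr>>%VS = fullv ->
  splittingFieldFor 1 (map_poly (in_alg L) p) fullv.
Proof.
move=> Dp genL; exists rr => //; congr (_ %= _): (eqpxx (map_poly (in_alg L) p)).
apply/(map_poly_inj LC).
rewrite -map_poly_comp (eq_map_poly (fun a => rmorphZ_num LC a 1)).
rewrite (eq_map_poly (fun a => etrans (congr1 _ (rmorph1 LC)) (mulr1 _))).
rewrite Dp big_map rmorph_prod /=; apply: eq_bigr => a _.
by rewrite map_polyXsubC.
Qed.

(* The map x |-> y is a field
   embedding of Q(x), which extends to a number field splitting the minimal
   polynomial, and from there to all of algC. *)
Lemma minCpoly_aut_root (x y : algC) : root (minCpoly x) y ->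
  exists nu : {rmorphism algC -> algC}, nu x = y.
Proof.
move=> ry; have [p [Dp mon_p] min_p] := minCpolyP x.
have [r Dr] := closed_field_poly_normal (pQtoC p : {poly algC}).
rewrite lead_coef_map (monicP mon_p) rmorph1 scale1r in Dr.
have [L [LC [rr Drr genL]]] := num_field_exists r.
have split_p : splittingFieldFor 1 (map_poly (in_alg L) p) fullv.
  by apply: splittingField_roots genL; rewrite Dr -Drr.
have [xx Dxx] : {xx | LC xx = x}.
  have : x \in r by rewrite -root_prod_XsubC -Dr -Dp root_minCpoly.
  by rewrite -Drr => /mapP/sig2_eqW[xx]; exists xx.
have [yy Dyy] : {yy | LC yy = y}.
  have : y \in r by rewrite -root_prod_XsubC -Dr -Dp.
  by rewrite -Drr => /mapP/sig2_eqW[yy]; exists yy.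
have yy_root : root (map_poly (\1%VF : 'End(L)) (minPoly 1 xx)) yy.
  rewrite (eq_map_poly (fun z => id_lfunE z)) map_poly_id //.
  have [q1 Dq1] := polyOver1_rat LC (minPolyOver 1 xx).
  have : root (pQtoC q1) x by rewrite -Dq1 -Dxx fmorph_root root_minPoly.
  rewrite min_p => /dvdpP[s Ds].
  have : root (pQtoC q1) y by rewrite Ds rmorphM rootM /= -Dp ry orbT.
  by rewrite -Dq1 -Dyy fmorph_root.
have hom1 : kHom 1 1 (\1%VF : 'End(L)) by rewrite kHom1.
have homf := kHomExtendP (subvv _) hom1 yy_root.
have pL_over1 : map_poly (in_alg L) p \is a polyOver 1%VS.
  by apply/polyOverP=> i; rewrite coef_map memvZ ?memv_line.
have [g homg Dg] := kHom_extends (sub1v _) homf pL_over1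
  (splittingFieldForS (sub1v _) (subvf _) split_p).
pose gM := GRing.isMonoidMorphism.Build _ _ g (kHom_monoid_morphism homg).
pose gR : {rmorphism L -> L} := HB.pack (fun_of_lfun g) gM.
have [nu Dnu] := extend_algC_subfield_aut LC gR.
exists nu; rewrite -Dxx -Dnu /= -Dg ?memv_adjoin //.
by rewrite (kHomExtend_val hom1 yy_root) Dyy.
Qed.

Lemma minCpoly_conjugates z : minCpoly z = \prod_(a <- conjugates z) ('X - a%:P).
Proof.
rewrite /conjugates; case: closed_field_poly_normal => r /= Dr.
by rewrite {1}Dr (monicP (minCpoly_monic z)) scale1r.
Qed.

Lemma mem_conjugates z y : (y \in conjugates z) = root (minCpoly z) y.
Proof. by rewrite minCpoly_conjugates root_prod_XsubC. Qed.

Lemma conjugates_self z : z \in conjugates z.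
Proof. by rewrite mem_conjugates root_minCpoly. Qed.

Lemma size_conjugates z : size (conjugates z) = degC z.
Proof. by rewrite /degC minCpoly_conjugates size_prod_XsubC. Qed.

Lemma size_minCpoly_deg z : size (minCpoly z) = (degC z).+1.
Proof. by rewrite /degC prednK // ltnW // size_minCpoly. Qed.

Lemma degC_gt0 z : (0 < degC z)%N.
Proof. by rewrite -ltnS -size_minCpoly_deg size_minCpoly. Qed.

Lemma conjugates_aut (nu : {rmorphism algC -> algC}) z y :
  (y \in conjugates (nu z)) = (y \in conjugates z).
Proof. by rewrite !mem_conjugates minCpoly_aut. Qed.

Lemma deriv_neq0 (R : numDomainType) (p : {poly R}) :
  (1 < size p)%N -> p^`() != 0.
Proof.
move=> p_gt1; apply/eqP => /(congr1 (fun q : {poly R} => q`_(size p).-2)).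
rewrite coef_deriv coef0.
have -> : ((size p).-2.+1 = (size p).-1)%N by case: (size p) p_gt1 => // -[].
rewrite -lead_coefE => /eqP.
rewrite mulrn_eq0 lead_coef_eq0 -size_poly_eq0.
by case: (size p) p_gt1 => // -[].
Qed.

(* Minimal polynomials are separable: a common root w of the rational
   minimal polynomial p of z and of p' is conjugate to z, so z is a root
   of p' as well, which is impossible as p' is nonzero of smaller degree. *)
Lemma uniq_conjugates z : uniq (conjugates z).
Proof.
rewrite -separable_prod_XsubC -minCpoly_conjugates.
have [p [Dp mon_p] min_p] := minCpolyP z.
have p_gt1 : (1 < size p)%N.
  by rewrite -(size_map_poly (ratr : {rmorphism rat -> algC})) -Dp size_minCpoly.
rewrite Dp separable_map unlock; apply: contraT => ncop.
have [w rw] : exists w, root (pQtoC (gcdp p p^`())) w.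
  by apply/closed_rootP; rewrite size_map_poly.
have [nu Dnu] : exists nu : {rmorphism algC -> algC}, nu z = w.
  apply: minCpoly_aut_root; rewrite Dp.
  by apply: root_dvdp rw; rewrite dvdp_map dvdp_gcdl.
have : root (pQtoC p^`()) z.
  rewrite -(fmorph_root nu) -map_poly_comp (eq_map_poly (fmorph_rat nu)) Dnu.
  by apply: root_dvdp rw; rewrite dvdp_map dvdp_gcdr.
rewrite min_p => /(dvdp_leq (deriv_neq0 p_gt1)).
by rewrite leqNgt lt_size_deriv // -size_poly_gt0 (ltnW p_gt1).
Qed.

Lemma conjugates_expr z k y : y \in conjugates (z ^+ k) ->
  exists2 t, t \in conjugates z & y = t ^+ k.
Proof.
rewrite mem_conjugates => /minCpoly_aut_root[nu Dnu].
exists (nu z); first by rewrite -(conjugates_aut nu) conjugates_self.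
by rewrite -Dnu rmorphXn.
Qed.

Lemma coef_prod_XsubC_bound (R : numDomainType) (s : seq R) i :
  (forall b, b \in s -> `|b| <= 1) ->
  `|(\prod_(b <- s) ('X - b%:P))`_i| <= (2 ^ size s)%:R.
Proof.
elim: s i => [|b s IH] i s_le1.
  by rewrite big_nil coef1 expn0; case: (i == 0)%N; rewrite ?normr1 ?normr0.
have {}IH j : `|(\prod_(c <- s) ('X - c%:P))`_j| <= (2 ^ size s)%:R.
  by apply: IH => c cs; apply: s_le1; rewrite in_cons cs orbT.
have b_le1 : `|b| <= 1 by apply: s_le1; rewrite mem_head.
rewrite big_cons mulrBl coefB coefXM coefCM /= expnS natrM mulr2n mulrDl mul1r.
apply: le_trans (ler_normB _ _) _; apply: lerD.
  by case: (i == 0)%N; rewrite ?normr0 ?ler0n.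
by rewrite normrM -[X in _ <= X]mul1r ler_pM.
Qed.

(* Integer polynomials of degree at most D with coefficients bounded by M
   are encoded by functions 'I_(D+1) -> 'I_(2M+1) (coefficients shifted by
   M). *)
Definition int_code_poly {R : nzRingType} (D M : nat)
    (c : {ffun 'I_D.+1 -> 'I_(M + M).+1}) : {poly R} :=
  \poly_(i < D.+1) ((c (inord i))%:R - M%:R).
Arguments int_code_poly {R} D M c.

Lemma int_code_polyP (R : archiNumDomainType) (D M : nat) (q : {poly R}) :
  q \is a polyOver Num.int -> (size q <= D.+1)%N -> (forall i, `|q`_i| <= M%:R) ->
  exists c, q = int_code_poly D M c.
Proof.
move=> /polyOverP q_int q_size q_bound.
have z_ i : {z : int | q`_i = z%:~R} by apply/sig_eqW/intrP.
exists [ffun i : 'I_D.+1 => inord (absz (sval (z_ i) + M%:Z))].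
apply/polyP => i; rewrite coef_poly.
case: ltnP => [lt_iD | le_Di]; last by rewrite nth_default // (leq_trans q_size).
rewrite ffunE /= (inordK lt_iD); case: (z_ i) => z /= Dz.
have z_bound : `|z| <= M%:Z by rewrite -(ler_int R) intr_norm -Dz.
have zM_ge0 : 0 <= z + M%:Z.
  by rewrite -lerBlDr sub0r; move: z_bound; rewrite ler_norml => /andP[].
rewrite inordK; last first.
  by rewrite ltnS -lez_nat gez0_abs // PoszD lerD2r (le_trans (ler_norm _)).
by rewrite Dz natr_absz ger0_norm // rmorphD /= addrK.
Qed.

(* Hence finitely many such polynomials exist, and all the nonzero ones
   divide a single nonzero polynomial. *)
Lemma bounded_int_polys_dvd (R : archiNumDomainType) (D M : nat) :
  exists2 B : {poly R}, B != 0 & forall q : {poly R}, q != 0 ->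
    q \is a polyOver Num.int -> (size q <= D.+1)%N ->
    (forall i, `|q`_i| <= M%:R) -> q %| B.
Proof.
pose code := @int_code_poly R D M; pose B := \prod_(c | code c != 0) code c.
exists B => [|q q0 q_int q_size q_bound]; first exact/prodf_neq0.
have [c Dq] := int_code_polyP q_int q_size q_bound.
by rewrite /B (bigD1 c) /code -Dq //= dvdp_mulIl.
Qed.

(* A nonzero x all of whose positive powers are roots of a fixed nonzero
   polynomial is a root of unity: the powers cannot all be distinct. *)
Lemma root_of_unity_of_powers (R : idomainType) (q : {poly R}) (x : R) :
  q != 0 -> x != 0 -> (forall k, root q (x ^+ k.+1)) ->
  exists2 n, (0 < n)%N & x ^+ n = 1.
Proof.
move=> q0 x0 q_pow.
have [/existsP[k /eqP xk1] | no_unity] :=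
  boolP [exists k : 'I_(size q), x ^+ k.+1 == 1]; first by exists k.+1.
have pow_neq i j : (i < j < size q)%N -> x ^+ i.+1 != x ^+ j.+1.
  case/andP=> lt_ij lt_jq; apply: contra no_unity => /eqP eq_ij.
  have lt_jiq : ((j - i).-1 < size q)%N.
    by rewrite (leq_ltn_trans _ lt_jq) // (leq_trans (leq_pred _)) ?leq_subr.
  apply/existsP; exists (Ordinal lt_jiq); rewrite /= prednK ?subn_gt0 //.
  apply/eqP/(mulIf (expf_neq0 i.+1 x0)).
  by rewrite mul1r -exprD addnS subnK 1?ltnW.
have uniq_pow : uniq [seq x ^+ k.+1 | k <- iota 0 (size q)].
  rewrite map_inj_in_uniq ?iota_uniq // => i j.
  rewrite !mem_iota !add0n /= => lt_iq lt_jq eq_ij.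
  case: (ltngtP i j) => // [lt_ij | lt_ji].
    by move: (pow_neq i j); rewrite lt_ij lt_jq eq_ij eqxx => /(_ isT).
  by move: (pow_neq j i); rewrite lt_ji lt_iq eq_ij eqxx => /(_ isT).
have all_root : all (root q) [seq x ^+ k.+1 | k <- iota 0 (size q)].
  by apply/allP => _ /mapP[k _ ->].
by have := max_poly_roots q0 all_root uniq_pow; rewrite size_map size_iota ltnn.
Qed.

(* The minimal polynomials of its
   powers have bounded degree and bounded integer coefficients, so the
   powers are all roots of one nonzero polynomial. *)
Lemma kronecker x : x \in Aint -> (forall y, y \in conjugates x -> `|y| = 1) ->
  exists2 n, (0 < n)%N & x ^+ n = 1.
Proof.
move=> x_int x_unit.
have x0 : x != 0 by rewrite -normr_eq0 (x_unit x (conjugates_self x)) oner_eq0.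
have pow_le1 k y : y \in conjugates (x ^+ k) -> `|y| <= 1.
  by case/conjugates_expr => t /x_unit t1 ->; rewrite normrX t1 expr1n.
have size_pow k : (size (conjugates (x ^+ k)) <= degC x)%N.
  rewrite -size_conjugates -(size_map (fun t : algC => t ^+ k) (conjugates x)).
  apply: uniq_leq_size; first exact: uniq_conjugates.
  by move=> y /conjugates_expr[t tx ->]; apply: map_f.
have [B B0 dvdB] := bounded_int_polys_dvd algC (degC x) (2 ^ degC x).
apply: root_of_unity_of_powers B0 x0 _ => k.
apply: root_dvdp (root_minCpoly _); apply: dvdB.
- by rewrite minCpoly_eq0.
- by have : x ^+ k.+1 \in Aint := rpredX _ x_int.
- by rewrite size_minCpoly_deg ltnS -size_conjugates.
move=> i; rewrite minCpoly_conjugates.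
apply: le_trans (coef_prod_XsubC_bound _ (pow_le1 _)) _.
by rewrite ler_nat leq_pexp2l.
Qed.

Section IntegerMinimalPolynomial.
Variables (z : algC) (p : {poly int}).
Hypothesis Zp : Zminpoly z p.

Lemma Zminpoly_neq0 : p != 0.
Proof. by case: Zp => cp _; rewrite -zcontents_eq0 cp oner_eq0. Qed.

Lemma Zminpoly_lead_gt0 : 0 < lead_coef p.
Proof. by case: Zp => cp _; rewrite -sgz_gt0 -sgz_contents cp. Qed.

Lemma Zminpoly_map : pZtoC p = (lead_coef p)%:~R *: minCpoly z.
Proof. by case: Zp. Qed.

Lemma Zminpoly_monic : lead_coef p = 1 -> minCpoly z = pZtoC p.
Proof. by move=> lead1; rewrite Zminpoly_map lead1 scale1r. Qed.

Lemma Zminpoly_deg : degC z = (size p).-1.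
Proof.
have := size_map_inj_poly (@intr_inj algC) (rmorph0 _) p.
rewrite Zminpoly_map size_scale ?intr_eq0 ?lead_coef_eq0 ?Zminpoly_neq0 //.
by rewrite size_minCpoly_deg => <-.
Qed.

Lemma Zminpoly_root a : a \in conjugates z -> root (pZtoC p) a.
Proof.
rewrite mem_conjugates Zminpoly_map rootZ // intr_eq0 lead_coef_eq0.
exact: Zminpoly_neq0.
Qed.

Lemma Zminpoly_coef0 :
  (p`_0)%:~R = (lead_coef p)%:~R * ((-1) ^+ degC z * \prod_(a <- conjugates z) a).
Proof.
have := congr1 (fun q : {poly algC} => q`_0) Zminpoly_map.
by rewrite /= coefZ minCpoly_conjugates coef0_prod_XsubC size_conjugates coef_map.
Qed.

Lemma height_outside : (forall a, a \in conjugates z -> 1 <= `|a|) ->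
  heightC z (lead_coef p) = (degC z).-root (absz p`_0)%:R /\ p`_0 != 0.
Proof.
move=> out.
have E : (lead_coef p)%:~R * \prod_(a <- conjugates z) Num.max 1 `|a|
    = `|(p`_0)%:~R : algC|.
  rewrite Zminpoly_coef0 !normrM normr_sign mul1r normr_prod -intr_norm.
  rewrite gtr0_norm ?Zminpoly_lead_gt0 //; congr (_ * _).
  by rewrite !big_seq; apply: eq_bigr => a /out a_ge1; rewrite max_r.
split; first by rewrite /heightC E -intr_norm natr_absz.
apply/eqP => p00; have := Zminpoly_coef0; rewrite p00 /= => /esym/eqP.
rewrite mulf_eq0 intr_eq0 gt_eqF ?Zminpoly_lead_gt0 //= mulf_eq0 signr_eq0 /=.
rewrite prodf_seq_eq0 => /hasP[a /out a_ge1 /= /eqP a0].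
by move: a_ge1; rewrite a0 normr0 ler10.
Qed.

Lemma height_inside : (forall a, a \in conjugates z -> `|a| < 1) ->
  heightC z (lead_coef p) = (degC z).-root (absz (lead_coef p))%:R.
Proof.
move=> inside; rewrite /heightC big_seq big1 ?mulr1 => [|a /inside a_lt1].
  by rewrite natr_absz gtr0_norm ?Zminpoly_lead_gt0.
by rewrite max_l // ltW.
Qed.

End IntegerMinimalPolynomial.

(* The reciprocal polynomial t^(deg p) p(1/t), whose roots are the inverses
   of the nonzero roots of p; it shows that z and 1/z have the same degree. *)
Definition reciprocal (R : nzRingType) (p : {poly R}) : {poly R} :=
  \poly_(i < size p) p`_((size p).-1 - i).

Lemma reciprocal_neq0 (R : nzRingType) (p : {poly R}) :
  p != 0 -> reciprocal p != 0.
Proof.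
move=> p0; apply/eqP => /(congr1 (coefp 0)) /=.
rewrite coef_poly size_poly_gt0 p0 subn0 coef0 -lead_coefE => /eqP.
by rewrite lead_coef_eq0 (negPf p0).
Qed.

Lemma reciprocal_map (F : fieldType) (R : nzRingType) (f : {rmorphism F -> R})
    (p : {poly F}) :
  map_poly f (reciprocal p) = reciprocal (map_poly f p).
Proof.
apply/polyP => i; rewrite coef_map !coef_poly size_map_poly.
case: ifP => [lt_ip | _]; last exact: raddf0.
by rewrite (leq_ltn_trans (leq_subr _ _)) // ltn_predL (leq_ltn_trans _ lt_ip).
Qed.

Lemma horner_reciprocal (F : fieldType) (p : {poly F}) (x : F) : x != 0 ->
  (reciprocal p).[x^-1] * x ^+ (size p).-1 = p.[x].
Proof.
move=> x0; have [->|p0] := eqVneq p 0.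
  by rewrite /reciprocal size_poly0 poly_def big_ord0 !horner0 mul0r.
set n := (size p).-1; have sp : size p = n.+1 by rewrite prednK ?size_poly_gt0.
rewrite /reciprocal (horner_coef_wide _ (size_poly _ _)) sp.
rewrite (horner_coef_wide x (eq_leq sp)) mulr_suml (reindex_inj rev_ord_inj).
apply: eq_bigr => i _; rewrite /= coef_poly subSS ltnS leq_subr subKn ?leq_ord //.
rewrite -mulrA; congr (_ * _).
have -> : x ^+ n = x ^+ (n - i) * x ^+ i by rewrite -exprD subnK // -ltnS.
by rewrite mulrA -exprMn mulVf // expr1n mul1r.
Qed.

Lemma degC_inv_le (z : algC) : z != 0 -> (degC z^-1 <= degC z)%N.
Proof.
move=> z0; have [p [Dp mon_p] _] := minCpolyP z.
have [q [Dq _] min_q] := minCpolyP z^-1.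
have p0 : p != 0 by apply: monic_neq0.
have pz : (pQtoC p).[z] = 0 by rewrite -Dp; apply/rootP/root_minCpoly.
have : root (pQtoC (reciprocal p)) z^-1.
  have := horner_reciprocal (pQtoC p) z0; rewrite [RHS]pz => /eqP.
  by rewrite mulf_eq0 expf_eq0 (negPf z0) andbF orbF reciprocal_map.
rewrite min_q => /(dvdp_leq (reciprocal_neq0 p0)) le_qp.
rewrite -ltnS -!size_minCpoly_deg Dq Dp !size_map_poly.
exact: leq_trans le_qp (size_poly _ _).
Qed.

Lemma degC_inv (z : algC) : degC z^-1 = degC z.
Proof.
have [->|z0] := eqVneq z 0; first by rewrite invr0.
apply/eqP; rewrite eqn_leq degC_inv_le //.
by rewrite -{1}(invrK z) degC_inv_le ?invr_eq0.
Qed.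

Lemma Zminpoly_of_root (f : {poly int}) (z : algC) : zcontents f = 1 ->
  root (pZtoC f) z -> degC z = (size f).-1 -> Zminpoly z f.
Proof.
move=> cf fz deg_z; split => //.
have f0 : f != 0 by rewrite -zcontents_eq0 cf oner_eq0.
have [p [Dp mon_p] min_p] := minCpolyP z.
have size_fQ : size (pZtoQ f) = size f := size_map_inj_poly (@intr_inj _) (rmorph0 _) f.
have pZtoQtoC : pQtoC (pZtoQ f) = pZtoC f.
  by rewrite -map_poly_comp; apply: eq_map_poly => c /=; rewrite ratr_int.
have p_dvd : p %| pZtoQ f by rewrite -min_p pZtoQtoC.
have size_p : size p = size f.
  rewrite -(size_map_poly (ratr : {rmorphism rat -> algC})) -Dp size_minCpoly_deg.
  by rewrite deg_z prednK // size_poly_gt0.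
have : p %= pZtoQ f by rewrite -dvdp_size_eqp // size_fQ size_p.
rewrite eqp_sym => /eqpfP; rewrite (monicP mon_p) divr1 => /(congr1 pQtoC).
rewrite map_polyZ /= -Dp pZtoQtoC => ->.
by rewrite lead_coef_map_inj ?ratr_int //; apply: intr_inj.
Qed.

Lemma degC_irreducible (f : {poly int}) (z : algC) : irreducible_poly f ->
  root (pZtoC f) z -> degC z = (size f).-1.
Proof.
move=> /irreducible_rat_int irrQ fz; have [p [Dp mon_p] min_p] := minCpolyP z.
have p_dvd : p %| pZtoQ f.
  rewrite -min_p -map_poly_comp (eq_map_poly (fun c => ratr_int _ c)).
  exact: fz.
have size_p1 : size p != 1%N.
  rewrite -(size_map_poly (ratr : {rmorphism rat -> algC})) -Dp.
  by rewrite neq_ltn size_minCpoly orbT.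
rewrite /degC Dp size_map_poly (eqp_size (irrQ.2 p size_p1 p_dvd)).
by rewrite (size_map_inj_poly (@intr_inj _) (rmorph0 _)).
Qed.

Definition binom (a b d : nat) : {poly int} := a%:Z *: 'X^d + (b%:Z)%:P.

Section Binomial.
Variable d : nat.
Hypothesis d_gt0 : (0 < d)%N.

Lemma size_binom (a b : nat) : (0 < a)%N -> size (binom a b d) = d.+1.
Proof.
move=> a_gt0; have size_aX : size (a%:Z *: 'X^d : {poly int}) = d.+1.
  by rewrite size_scale ?size_polyXn // -lt0n.
by rewrite /binom size_polyDl size_aX // ltnS (leq_trans (size_polyC_leq1 _)).
Qed.

Lemma lead_binom (a b : nat) : (0 < a)%N -> lead_coef (binom a b d) = a.
Proof.
move=> a_gt0.
rewrite /binom lead_coefDl ?lead_coefZ ?lead_coefXn ?mulr1 //.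
by rewrite size_scale ?size_polyXn -?lt0n // ltnS (leq_trans (size_polyC_leq1 _)).
Qed.

Lemma coef_binom (a b i : nat) :
  (binom a b d)`_i = if i == 0%N then b%:Z else if i == d then a%:Z else 0.
Proof.
rewrite /binom coefD coefZ coefXn coefC.
have [->|i0] := eqVneq i 0%N; first by rewrite eq_sym gtn_eqF //= mulr0 add0r.
by rewrite /= addr0; case: eqP; rewrite ?mulr1 ?mulr0.
Qed.

Lemma horner_binom (a b : nat) (x : algC) :
  (pZtoC (binom a b d)).[x] = a%:R * x ^+ d + b%:R.
Proof.
by rewrite /binom -mul_polyC rmorphD rmorphM /= map_polyXn !map_polyC !hornerE.
Qed.

Lemma zcontents_binom (a b : nat) : (0 < a)%N -> coprime a b ->
  zcontents (binom a b d) = 1.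
Proof.
move=> a_gt0 co_ab; set c := zcontents _.
have /polyOverP c_dvd : binom a b d \is a polyOver (dvdz c) by rewrite -dvdz_contents.
have c_a : (c %| a%:Z)%Z by have := c_dvd d; rewrite coef_binom gtn_eqF ?eqxx.
have c_b : (c %| b%:Z)%Z by have := c_dvd 0%N; rewrite coef_binom.
have : (c %| gcdz a%:Z b%:Z)%Z by rewrite dvdz_gcd c_a c_b.
rewrite /gcdz /= (eqP co_ab) dvdzE dvdn1 => /eqP c1.
have sgz_c : sgz c = 1 by rewrite /c sgz_contents lead_binom ?gtr0_sgz // ltz_nat.
by rewrite [c]intEsg sgz_c c1.
Qed.

Lemma binom_irreducible (a P : nat) : (0 < a)%N -> prime P -> ~~ (P %| a)%N ->
  irreducible_poly (binom a P d).
Proof.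
move=> a_gt0 P_prime P_a; apply: (eisenstein_crit P_prime).
- by rewrite size_binom ?eqSS -?lt0n.
- by rewrite lead_binom.
- rewrite coef_binom /= dvdzE /= expr2; apply/negP => /dvdn_leq.
  by rewrite prime_gt0 // leqNgt ltn_Pmull ?prime_gt1 ?prime_gt0 // => /(_ isT).
move=> i; rewrite size_binom //= coef_binom => lt_id.
by case: eqP => [_|_]; rewrite ?dvdz_nat ?dvdnn // ltn_eqF ?dvdz0.
Qed.

Lemma binom_root_norm (a b : nat) (x : algC) : root (pZtoC (binom a b d)) x ->
  a%:R * `|x| ^+ d = b%:R.
Proof.
move/rootP; rewrite horner_binom => /eqP; rewrite addr_eq0 => /eqP E.
by have := congr1 (fun t : algC => `|t|) E; rewrite /= normrM normrN !normr_nat normrX.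
Qed.

Lemma binom_root_inv (a b : nat) (x : algC) : (0 < b)%N ->
  root (pZtoC (binom a b d)) x ->
  root (pZtoC (binom b a d)) x^-1.
Proof.
move=> b_gt0 bx; have x0 : x != 0.
  apply: contraTneq bx => ->; rewrite rootE horner_binom expr0n gtn_eqF //.
  by rewrite mulr0 add0r pnatr_eq0 -lt0n.
move/rootP: bx; rewrite rootE !horner_binom => E.
(* (b x^-d + a) x^d = a x^d + b, and x^d is regular *)
rewrite -(mulIr_eq0 _ (mulIf (expf_neq0 d x0))) mulrDl -mulrA -exprMn mulVf //.
by rewrite expr1n mulr1 addrC E.
Qed.

End Binomial.

Lemma eisenstein_binom_pair (a P d : nat) : (0 < d)%N -> (0 < a)%N -> prime P ->
  ~~ (P %| a)%N -> exists z, Zminpoly z (binom a P d) /\ Zminpoly z^-1 (binom P a d).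
Proof.
move=> d_gt0 a_gt0 P_prime P_a; have P_gt0 := prime_gt0 P_prime.
have co_aP : coprime a P by rewrite coprime_sym prime_coprime.
have [z z_root] : exists z, root (pZtoC (binom a P d)) z.
  apply/closed_rootP; rewrite (size_map_inj_poly (@intr_inj _) (rmorph0 _)).
  by rewrite size_binom // eqSS -lt0n.
have deg_z : degC z = d.
  by rewrite (degC_irreducible (binom_irreducible _ _ _ _) z_root) ?size_binom.
exists z; split; apply: Zminpoly_of_root.
- exact: zcontents_binom.
- exact: z_root.
- by rewrite size_binom.
- by rewrite zcontents_binom // coprime_sym.
- exact: binom_root_inv z_root.
- by rewrite degC_inv size_binom.
Qed.

Lemma Bset_binom (a b d : nat) (z : algC) : (0 < d)%N -> (0 < a)%N -> (0 < b)%N ->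
  Zminpoly z (binom a b d) ->
  ((a < b)%N -> Bset 0 d (d.-root b%:R)) /\ ((b < a)%N -> Bset d d (d.-root a%:R)).
Proof.
move=> d_gt0 a_gt0 b_gt0 Zz.
have deg_z : degC z = d by rewrite (Zminpoly_deg Zz) size_binom.
have norm_conj x : x \in conjugates z -> a%:R * `|x| ^+ d = b%:R :> algC.
  by move/(Zminpoly_root Zz)/binom_root_norm.
split => [lt_ab | lt_ba].
  have outside x : x \in conjugates z -> 1 <= `|x|.
    move=> xz; rewrite real_leNgt ?realE ?normr_ge0 ?ler01 ?orbT //.
    apply: contraTN lt_ab => x_lt1; rewrite -leqNgt -(ler_nat algC) -(norm_conj x xz).
    by rewrite -[leRHS]mulr1 ler_wpM2l // exprn_ile1 // ltW.
  exists z, (binom a b d); split; [split=> // | split=> //].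
    apply/eqP; rewrite -leqn0 leqNgt -has_count; apply/hasPn => x /outside.
    by rewrite real_leNgt ?realE ?normr_ge0 ?ler01 ?orbT.
  by have [-> _] := height_outside Zz outside; rewrite deg_z coef_binom.
have inside x : x \in conjugates z -> `|x| < 1.
  move=> xz; rewrite real_ltNge ?realE ?normr_ge0 ?ler01 ?orbT //.
  apply: contraTN lt_ba => x_ge1; rewrite -leqNgt -(ler_nat algC) -(norm_conj x xz).
  by rewrite -[leLHS]mulr1 ler_wpM2l // exprn_ege1.
exists z, (binom a b d); split; [split=> // | split=> //].
  by apply/eqP; rewrite -deg_z -size_conjugates -all_count; apply/allP.
by rewrite (height_inside Zz inside) deg_z lead_binom.
Qed.

(* For n >= 3 take the Eisenstein pair n t^d + P and
   P t^d + n, with P a prime factor of n - 1 (so P < n and P does not divide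
   n); for n = 2 take t^d + 2 and 2 t^d + 1. *)
Lemma Nroot_in_B (d n : nat) : (0 < d)%N -> (1 < n)%N ->
  Bset 0 d (d.-root n%:R) /\ Bset d d (d.-root n%:R).
Proof.
move=> d_gt0 n_gt1; have [-> | n_neq2] := eqVneq n 2%N.
  have [z [Zz Zzi]] := @eisenstein_binom_pair 1 2 d d_gt0 isT isT isT.
  by split; [apply: (Bset_binom _ _ _ Zz).1 | apply: (Bset_binom _ _ _ Zzi).2].
have [m def_n] : exists m, n = m.+1 by exists n.-1; rewrite prednK // ltnW.
have m_gt1 : (1 < m)%N.
  by move: n_gt1 n_neq2; rewrite def_n; case: m {def_n} => [|[|m]] //.
set P := pdiv m; have P_prime : prime P := pdiv_prime m_gt1.
have P_dvd : (P %| m)%N := pdiv_dvd m.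
have P_lt_n : (P < n)%N by rewrite def_n ltnS dvdn_leq // ltnW.
have P_n : ~~ (P %| n)%N.
  by rewrite def_n -addn1 (dvdn_addr _ P_dvd) dvdn1 neq_ltn (prime_gt1 P_prime) orbT.
have n_gt0 : (0 < n)%N := ltnW n_gt1; have P_gt0 := prime_gt0 P_prime.
have [z [Zz Zzi]] := eisenstein_binom_pair d_gt0 n_gt0 P_prime P_n.
by split; [apply: (Bset_binom _ _ _ Zzi).1 | apply: (Bset_binom _ _ _ Zz).2].
Qed.

Lemma prod_ge1_eq1 (R : numDomainType) (s : seq R) :
  (forall y, y \in s -> 1 <= y) -> \prod_(y <- s) y = 1 ->
  forall y, y \in s -> y = 1.
Proof.
elim: s => // y s IH s_ge1; rewrite big_cons => prod1.
have y_ge1 : 1 <= y by apply: s_ge1; rewrite mem_head.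
have {}s_ge1 t : t \in s -> 1 <= t by move=> ts; apply: s_ge1; rewrite in_cons ts orbT.
have prod_ge1 : 1 <= \prod_(t <- s) t.
  by rewrite big_seq; apply: (big_ind (fun v => 1 <= v)) => // u v; apply: mulr_ege1.
have y1 : y = 1.
  apply/eqP; rewrite eq_le y_ge1 andbT -prod1 -[leLHS]mulr1.
  by rewrite ler_wpM2l // (le_trans ler01 y_ge1).
move=> t; rewrite in_cons => /predU1P[-> // | ts].
by apply: (IH s_ge1 _ t ts); move: prod1; rewrite y1 mul1r.
Qed.

Lemma prod_lt1 (R : numDomainType) (s : seq R) : s != [::] ->
  (forall y, y \in s -> 0 <= y < 1) -> \prod_(y <- s) y < 1.
Proof.
elim: s => // y s IH _ s01; rewrite big_cons.
have /andP[y_ge0 y_lt1] := s01 y (mem_head y s).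
have {}s01 t : t \in s -> 0 <= t < 1 by move=> ts; apply: s01; rewrite in_cons ts orbT.
have [-> | s_nil] := eqVneq s [::]; first by rewrite big_nil mulr1.
by rewrite mulr_ilt1 ?IH // big_seq prodr_ge0 // => t /s01 /andP[].
Qed.

Lemma conjugates0 w : w \in conjugates 0 -> w = 0.
Proof. by rewrite mem_conjugates => /minCpoly_aut_root[nu <-]; rewrite rmorph0. Qed.

Lemma degC0 : degC 0 = 1%N.
Proof.
apply/eqP; rewrite eqn_leq degC_gt0 andbT -size_conjugates.
apply: (@uniq_leq_size _ _ [:: 0]); first exact: uniq_conjugates.
by move=> w /conjugates0 ->; rewrite mem_seq1.
Qed.

(* 1 lies in B(0,d) when d = phi(n): a primitive n-th root of unity has
   minimal polynomial the n-th cyclotomic polynomial, of degree phi(n), and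
   all its conjugates lie on the unit circle. *)
Lemma one_in_B0 d : in_totient_image d -> Bset 0 d 1.
Proof.
case=> n [n_gt0 <-]; have [z prim_z] := C_prim_root_exists n_gt0.
have min_z : minCpoly z = pZtoC 'Phi_n.
  by rewrite (minCpoly_cyclotomic prim_z) (Cintr_Cyclotomic prim_z).
have lead1 : lead_coef 'Phi_n = 1 := monicP (Cyclotomic_monic n).
have deg_z : degC z = totient n.
  by rewrite /degC (minCpoly_cyclotomic prim_z) size_cyclotomic.
have conj_unit x : x \in conjugates z -> `|x| = 1.
  rewrite mem_conjugates (minCpoly_cyclotomic prim_z) (root_cyclotomic prim_z).
  move/prim_expr_order => xn1; apply/eqP.
  by rewrite -(pexpr_eq1 n_gt0) ?normr_ge0 // -normrX xn1 normr1.
exists z, 'Phi_n; split; [split=> // | split].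
- apply/eqP; rewrite -leqn0 leqNgt -has_count; apply/hasPn => x /conj_unit ->.
  by rewrite ltxx.
- by split; [apply: zcontents_monic (Cyclotomic_monic n) | rewrite lead1 scale1r min_z].
rewrite /heightC lead1 mul1r big_seq big1 => [|x /conj_unit ->]; last by rewrite maxxx.
by rewrite rootC1 // deg_z totient_gt0.
Qed.

(* 1 lies in B(1,1): it is the height of 0, with minimal polynomial t. *)
Lemma one_in_B11 : Bset 1 1 1.
Proof.
have Z0 : Zminpoly 0 'X.
  apply: Zminpoly_of_root; rewrite ?zcontents_monic ?monicX ?size_polyX ?degC0 //.
  by rewrite map_polyX rootX.
exists 0, 'X; split; [split; first exact: degC0 | split => //].
  apply/eqP; rewrite -[X in _ == X]degC0 -size_conjugates -all_count.
  by apply/allP => w /conjugates0 ->; rewrite normr0 ltr01.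
rewrite /heightC lead_coefX mul1r big_seq big1 ?degC0 ?rootC1 // => w /conjugates0 ->.
by rewrite normr0 max_l ?ler01.
Qed.

(* If no conjugate of z lies in the open unit disk and |p(0)| = 1, then
   a0 * (product of the moduli of the conjugates) = 1 with all factors >= 1,
   so a0 = 1 and all conjugates lie on the unit circle: by Kronecker's
   theorem z is a root of unity. *)
Lemma root_of_unity_of_unit_coef0 z p : Zminpoly z p ->
  (forall x, x \in conjugates z -> 1 <= `|x|) -> absz p`_0 = 1%N ->
  exists2 k, (0 < k)%N & z ^+ k = 1.
Proof.
move=> Zz outside p0_unit; pose a0 : algC := (lead_coef p)%:~R.
have a0_gt0 := Zminpoly_lead_gt0 Zz.
have prod1 : \prod_(y <- a0 :: map (fun t : algC => `|t|) (conjugates z)) y = 1.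
  rewrite big_cons big_map; have := congr1 (fun t : algC => `|t|) (Zminpoly_coef0 Zz).
  rewrite /= normrM normrM normr_sign mul1r normr_prod.
  rewrite [`|a0|]gtr0_norm ?ltr0z //.
  by rewrite -intr_norm -natr_absz p0_unit => <-.
have all1 := prod_ge1_eq1 _ prod1.
have {}all1 y : y \in a0 :: map (fun t : algC => `|t|) (conjugates z) -> y = 1.
  apply: all1 => {}y; rewrite in_cons => /predU1P[-> | /mapP[x /outside x_ge1 ->]] //.
  by rewrite ler1z -gtz0_ge1.
have lead1 : lead_coef p = 1.
  by apply/eqP; rewrite -(eqr_int algC) -/a0 (all1 _ (mem_head _ _)).
apply: kronecker => [|x xz]; last by apply: all1; rewrite in_cons map_f ?orbT.
apply/polyOverP => i; rewrite (Zminpoly_monic Zz lead1) coef_map.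
exact: intr_int.
Qed.

(* Heights in B(0,d) are d-th roots of |p(0)|; height 1 forces a root of
   unity, whose degree d is then a value of Euler's function. *)
Lemma B0_height d h : Bset 0 d h -> Nroot d h /\ (h = 1 -> in_totient_image d).
Proof.
case=> z [p [[deg_z count0] [Zz ->]]].
have outside x : x \in conjugates z -> 1 <= `|x|.
  move=> xz; rewrite real_leNgt ?realE ?normr_ge0 ?ler01 ?orbT //.
  apply/negP => x_lt1; suff : has (fun a : algC => `|a| < 1) (conjugates z).
    by rewrite has_count count0.
  by apply/hasP; exists x.
have [-> p0_neq0] := height_outside Zz outside.
split=> [|/eqP]; first by exists (absz p`_0); rewrite absz_gt0 deg_z.
rewrite rootC_eq1 ?degC_gt0 // pnatr_eq1 => /eqP p0_unit.
have [k k_gt0 zk] := root_of_unity_of_unit_coef0 Zz outside p0_unit.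
have [m prim_z _] := prim_order_exists k_gt0 zk.
exists m; split; first exact: prim_order_gt0 prim_z.
by rewrite -deg_z /degC (minCpoly_cyclotomic prim_z) size_cyclotomic.
Qed.

(* Heights in B(d,d) are d-th roots of the leading coefficient a0; height 1
   makes |p(0)| = |product of the conjugates| < 1, so p(0) = 0, z = 0 and
   d = 1. *)
Lemma Bdd_height d h : Bset d d h -> Nroot d h /\ (h = 1 -> d = 1%N).
Proof.
case=> z [p [[deg_z countd] [Zz ->]]].
have /allP inside : all (fun a : algC => `|a| < 1) (conjugates z).
  by rewrite all_count size_conjugates deg_z countd.
rewrite (height_inside Zz inside).
have a0_gt0 := Zminpoly_lead_gt0 Zz.
split=> [|/eqP]; first by exists (absz (lead_coef p)); rewrite absz_gt0 gt_eqF ?deg_z.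
rewrite rootC_eq1 ?degC_gt0 // pnatr_eq1 => /eqP lead_unit.
have lead1 : lead_coef p = 1 by rewrite -[lead_coef p]gtz0_abs // lead_unit.
have p0_small : `|(p`_0)%:~R : algC| < 1.
  rewrite (Zminpoly_coef0 Zz) lead1 mul1r normrM normr_sign mul1r normr_prod.
  rewrite -(big_map (fun t : algC => `|t|) xpredT idfun).
  apply: prod_lt1 => [|_ /mapP[x /inside x_lt1 ->]]; last by rewrite normr_ge0.
  by rewrite -size_eq0 size_map size_conjugates -lt0n degC_gt0.
have p0 : p`_0 = 0.
  by move: p0_small; rewrite -intr_norm ltrz1; case: (p`_0) => [[|k]|k].
have : root (minCpoly z) 0.
  by rewrite rootE horner_coef0 (Zminpoly_monic Zz lead1) coef_map p0.
case/minCpoly_aut_root => nu /eqP; rewrite fmorph_eq0 => /eqP z0.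
by rewrite -deg_z z0 degC0.
Qed.

Theorem lemma2p2 (d : nat) (hd : (0 < d)%N) :
  (~ in_totient_image d -> forall h : algC, Bset 0 d h <-> (Nroot d h /\ h <> 1)) /\
  (in_totient_image d -> forall h : algC, Bset 0 d h <-> Nroot d h) /\
  ((1 < d)%N -> forall h : algC, Bset d d h <-> (Nroot d h /\ h <> 1)) /\
  (d = 1%N -> forall h : algC, Bset d d h <-> Nroot d h).
Proof.
have Nroot_B h : Nroot d h -> h <> 1 -> Bset 0 d h /\ Bset d d h.
  case=> n [n_gt0 ->] h1; apply: Nroot_in_B => //.
  by rewrite ltn_neqAle n_gt0 andbT; apply/eqP => n1; apply: h1; rewrite -n1 rootC1.
split; [|split; [|split]].
- move=> not_tot h; split=> [/B0_height[Nh tot] | [Nh h1]].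
    by split=> // h1; apply/not_tot/tot.
  exact: (Nroot_B h Nh h1).1.
- move=> tot h; split=> [/B0_height[] // | Nh].
  have [-> | h1] := eqVneq h 1; first exact: one_in_B0.
  exact: (Nroot_B h Nh (elimN eqP h1)).1.
- move=> d_gt1 h; split=> [/Bdd_height[Nh d1] | [Nh h1]].
    by split=> // h1; move: d_gt1; rewrite (d1 h1).
  exact: (Nroot_B h Nh h1).2.
- move=> d1 h; split=> [/Bdd_height[] // | Nh].
  have [-> | h1] := eqVneq h 1; first by rewrite d1; exact: one_in_B11.
  exact: (Nroot_B h Nh (elimN eqP h1)).2.
Qed.
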